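(* Let $X$ be a topological space, $Y$ an Alexandroff space and $f:X\to Y$ a continuous surjection. Then for any join-preserving $\nabla_Y:\mathcal{O}(Y)\to\mathcal{O}(Y)$ and any valuation $V$ of the variables in $\mathcal{O}(Y)$, there exist a join-preserving $\nabla_X:\mathcal{O}(X)\to\mathcal{O}(X)$ and a valuation $U$ of the variables in $\mathcal{O}(X)$ such that for every sequent $\Gamma\Rightarrow A$, $(\mathcal{O}(X),\nabla_X,U)\vDash\Gamma\Rightarrow A$ iff $(\mathcal{O}(Y),\nabla_Y,V)\vDash\Gamma\Rightarrow A$. Moreover, for each class $\mathcal{C}\in\{i\mathbf{ST}(F),i\mathbf{ST}(wF)\}$, if $(\mathcal{O}(Y),\nabla_Y)\in\mathcal{C}$ then $(\mathcal{O}(X),\nabla_X)\in\mathcal{C}$. Consequently, for such $\mathcal{C}$, if $X\vDash_{\mathcal{C}}\Gamma\Rightarrow A$ then $Y\vDash_{\mathcal{C}}\Gamma\Rightarrow A$.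
   Context: $\mathcal{O}(Z)$ is the locale of opens of a space $Z$; a space is Alexandroff if arbitrary intersections of opens are open. Formulas of $\mathcal{L}_\nabla$ are built from variables and constants $1,\top,\bot$ by $\wedge,\vee,\otimes,\to$ and unary $\nabla$; sequents are $\Gamma\Rightarrow A$ with $\Gamma$ a finite sequence. For a join-preserving $\nabla$ on $\mathcal{O}(Z)$ (a spacetime $(\mathcal{O}(Z),\nabla)$), the implication is $W_1\to W_2=\Box(W_1\Rightarrow W_2)$ with $\Box$ the right adjoint of $\nabla$ and $\Rightarrow$ the Heyting implication of $\mathcal{O}(Z)$ (equivalently $W_1\cap\nabla W_2\subseteq W_3$ iff $W_2\subseteq W_1\to W_3$). A valuation of variables extends to all formulas by $1,\top\mapsto Z$, $\bot\mapsto\emptyset$, $\wedge,\otimes\mapsto\cap$, $\vee\mapsto\cup$, $\nabla\mapsto\nabla$, $\to\mapsto\to$; $(\mathcal{O}(Z),\nabla,V)\vDash\gamma_1,\dots,\gamma_n\Rightarrow A$ iff $V(\gamma_1)\cap\dots\cap V(\gamma_n)\subseteq V(A)$ (empty intersection $=Z$). $i\mathbf{ST}(F)$ is the class of such spacetimes with $W\subseteq\nabla W$ for all $W$; $i\mathbf{ST}(wF)$ those with $\nabla W=\emptyset\Rightarrow W=\emptyset$. $Z\vDash_{\mathcal{C}}\Gamma\Rightarrow A$ means $(\mathcal{O}(Z),\nabla,V)\vDash\Gamma\Rightarrow A$ for all $\nabla$ with $(\mathcal{O}(Z),\nabla)\in\mathcal{C}$ and all valuations $V$. *)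

From HB Require Import structures.
From mathcomp Require Import all_boot all_order.
From mathcomp Require Import all_classical all_reals all_analysis.
Set Implicit Arguments. Unset Strict Implicit. Unset Printing Implicit Defensive.
Local Open Scope classical_set_scope.

Inductive form : Type :=
| fvar : nat -> form
| fone : form
| ftop : form
| fbot : form
| fand : form -> form -> form
| for_ : form -> form -> form
| ftens : form -> form -> form
| fimp : form -> form -> form
| fnabla : form -> form.

Definition sequent := (seq form * form)%type.

Section Spacetime.
Variable Z : topologicalType.

Definition alexandroff : Prop :=
  forall S : set (set Z), (forall W, S W -> open W) -> open (\bigcap_(W in S) W).

(* nabla : O(Z) -> O(Z) join-preserving (arbitrary joins of opens);
   only its values on open sets matter. *)
Definition is_spacetime (nabla : set Z -> set Z) : Prop :=
  (forall W, open W -> open (nabla W)) /\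
  (forall S : set (set Z), (forall W, S W -> open W) ->
     nabla (\bigcup_(W in S) W) = \bigcup_(W in S) nabla W).

(* right adjoint of nabla on O(Z) *)
Definition box (nabla : set Z -> set Z) (W : set Z) : set Z :=
  \bigcup_(U in [set U | open U /\ nabla U `<=` W]) U.

Definition himp (W1 W2 : set Z) : set Z :=
  \bigcup_(U in [set U | open U /\ U `&` W1 `<=` W2]) U.

Definition arrow (nabla : set Z -> set Z) (W1 W2 : set Z) : set Z :=
  box nabla (himp W1 W2).

Definition valuation (V : nat -> set Z) : Prop := forall n, open (V n).

Fixpoint eval (nabla : set Z -> set Z) (V : nat -> set Z) (A : form) : set Z :=
  match A with
  | fvar n => V n
  | fone => setT
  | ftop => setT
  | fbot => set0
  | fand B C => eval nabla V B `&` eval nabla V C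
  | for_ B C => eval nabla V B `|` eval nabla V C
  | ftens B C => eval nabla V B `&` eval nabla V C
  | fimp B C => arrow nabla (eval nabla V B) (eval nabla V C)
  | fnabla B => nabla (eval nabla V B)
  end.

Definition sat (nabla : set Z -> set Z) (V : nat -> set Z) (s : sequent) : Prop :=
  foldr (fun g acc => eval nabla V g `&` acc) setT s.1 `<=` eval nabla V s.2.

Inductive stclass : Type := cF | cwF.

Definition in_class (C : stclass) (nabla : set Z -> set Z) : Prop :=
  is_spacetime nabla /\
  match C with
  | cF => forall W, open W -> W `<=` nabla W
  | cwF => forall W, open W -> nabla W = set0 -> W = set0
  end.

Definition valid (C : stclass) (s : sequent) : Prop :=
  forall nabla, in_class C nabla ->
  forall V, valuation V -> sat nabla V s.

End Spacetime.

(* Since Y is Alexandroff, every W : O(X) has a least open neighbourhood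
   [image_hull f W] of f(W), and [image_hull f] is left adjoint to the preimage map
   f^-1 : O(Y) -> O(X); surjectivity of f makes [image_hull f (f^-1 O) = O], so
   f^-1 reflects inclusions.  Put nabla_X := f^-1 o nabla_Y o image_hull f and
   U := f^-1 o V.  Being a composite of join-preserving maps, nabla_X is a
   spacetime, and f^-1 commutes with nabla and with the implication, so every
   formula is interpreted in X as the preimage of its interpretation in Y; hence
   the two models satisfy the same sequents.  The frame conditions transfer along
   the adjunction. *)
From Pilot Require Import Defs.
From mathcomp Require Import all_boot all_order.
From mathcomp Require Import all_classical all_reals all_analysis.
Local Open Scope classical_set_scope.

Section SpacetimeTheory.
Context {Z : topologicalType}.
Implicit Types (nabla : set Z -> set Z) (A B W : set Z).

Lemma spacetime_subset {nabla W W'} : is_spacetime nabla ->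
  open W -> open W' -> W `<=` W' -> nabla W `<=` nabla W'.
Proof.
move=> [_ nabla_bigcup] oW oW' WW'.
have -> : W' = \bigcup_(O in [set W; W']) O.
  rewrite eqEsubset; split=> z; last by case=> O [-> | ->] // /WW'.
  by exists W' => //; right.
rewrite nabla_bigcup; last by move=> O [-> | ->].
by move=> z nWz; exists W => //; left.
Qed.

Lemma arrow_open {nabla A B} : open (arrow nabla A B).
Proof. by apply: bigcup_open => ? []. Qed.

Lemma sub_arrowP {nabla} A B {W} : is_spacetime nabla -> open W ->
  W `<=` arrow nabla A B <-> A `&` nabla W `<=` B.
Proof.
move=> st oW; have [nabla_open nabla_bigcup] := st; split=> [WAB z [Az nWz]|AnWB z Wz].
  have := spacetime_subset st oW arrow_open WAB z nWz.
  rewrite /arrow/box nabla_bigcup; last by move=> ? [].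
  move=> [U [_ nUH] nUz]; have [U' [_ U'AB] U'z] := nUH z nUz.
  exact: (U'AB z (conj U'z Az)).
exists W => //; split=> // y nWy; exists (nabla W) => //.
by split; [exact: nabla_open | move=> u [? ?]; apply: AnWB].
Qed.

Lemma arrow_elim {nabla} A B : is_spacetime nabla ->
  A `&` nabla (arrow nabla A B) `<=` B.
Proof. by move=> st; apply/(sub_arrowP _ _ st arrow_open). Qed.

Lemma eval_open {nabla V} (F : form) : is_spacetime nabla -> valuation V ->
  open (Defs.eval nabla V F).
Proof.
move=> [nabla_open _] oV; elim: F => //= [|||F oF G oG|F oF G oG|F oF G oG|F _ G _|F oF].
- exact: openT.
- exact: openT.
- exact: open0.
- exact: openI.
- exact: openU.
- exact: openI.
- exact: arrow_open.
- exact: nabla_open.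
Qed.

End SpacetimeTheory.

Section Pullback.
Context {X Y : topologicalType} (f : X -> Y).
Hypotheses (Y_alex : alexandroff Y) (f_cont : continuous f)
  (f_surj : forall y : Y, exists x : X, f x = y).
Implicit Types (W : set X) (O P : set Y) (nablaY : set Y -> set Y).

Definition image_hull W : set Y :=
  \bigcap_(O in [set O | open O /\ f @` W `<=` O]) O.

Definition pullback_nabla nablaY W : set X := f @^-1` nablaY (image_hull W).

Lemma open_preimage O : open O -> open (f @^-1` O).
Proof. exact: (continuousP f).1. Qed.

Lemma preimage_subsetP O P : f @^-1` O `<=` f @^-1` P <-> O `<=` P.
Proof.
have f_onto : f @` setT = setT.
  by rewrite eqEsubset; split=> // y _; have [x <-] := f_surj y; exists x.
split=> [sOP|]; last exact: preimage_subset.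
by rewrite -(image_preimage O f_onto) -(image_preimage P f_onto); apply: image_subset.
Qed.

Lemma image_hull_open W : open (image_hull W).
Proof. by apply: Y_alex => O []. Qed.

Lemma image_hull_subP W O : open O -> image_hull W `<=` O <-> W `<=` f @^-1` O.
Proof.
move=> oO; split=> [WO x Wx|WO y hy]; last by apply: hy; split=> // _ [x /WO ? <-].
by apply: WO => P [_ fWP]; apply: fWP; exists x.
Qed.

Lemma sub_preimage_image_hull W : W `<=` f @^-1` image_hull W.
Proof. exact/(image_hull_subP _ _ (image_hull_open W)). Qed.

Lemma image_hull_subset W W' : W `<=` W' -> image_hull W `<=` image_hull W'.
Proof.
move=> WW'; apply/(image_hull_subP _ _ (image_hull_open W')).
exact: subset_trans (sub_preimage_image_hull W').
Qed.

Lemma image_hull_preimage O : open O -> image_hull (f @^-1` O) = O.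
Proof.
move=> oO; rewrite eqEsubset; split; first exact/image_hull_subP.
by apply/preimage_subsetP; apply: sub_preimage_image_hull.
Qed.

Lemma image_hull_bigcup (S : set (set X)) :
  image_hull (\bigcup_(W in S) W) = \bigcup_(W in S) image_hull W.
Proof.
rewrite eqEsubset; split.
  apply/image_hull_subP; first by apply: bigcup_open => W _; apply: image_hull_open.
  by move=> x [W SW Wx]; exists W => //; apply: sub_preimage_image_hull.
by move=> y [W SW]; apply: image_hull_subset => x Wx; exists W.
Qed.

Lemma pullback_nabla_preimage nablaY O : open O ->
  pullback_nabla nablaY (f @^-1` O) = f @^-1` nablaY O.
Proof. by move=> oO; rewrite /pullback_nabla image_hull_preimage. Qed.

Lemma pullback_spacetime {nablaY} : is_spacetime nablaY ->
  is_spacetime (pullback_nabla nablaY).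
Proof.
move=> [nablaY_open nablaY_bigcup]; split=> [W _|S _].
  exact/open_preimage/nablaY_open/image_hull_open.
rewrite /pullback_nabla image_hull_bigcup -(bigcup_image S image_hull id) nablaY_bigcup.
  by rewrite bigcup_image preimage_bigcup.
by move=> _ [W _ <-]; apply: image_hull_open.
Qed.

Lemma arrow_preimage nablaY A B : is_spacetime nablaY ->
  arrow (pullback_nabla nablaY) (f @^-1` A) (f @^-1` B) = f @^-1` arrow nablaY A B.
Proof.
move=> stY; have stX := pullback_spacetime stY.
rewrite eqEsubset; split.
  set W := arrow _ _ _.
  have /(sub_arrowP _ _ stX arrow_open) WAB : W `<=` W by [].
  have /preimage_subsetP AnWB : f @^-1` (A `&` nablaY (image_hull W)) `<=` f @^-1` B.
    by rewrite preimage_setI.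
  have /(sub_arrowP _ _ stY (image_hull_open W)) hullW := AnWB.
  apply: subset_trans (sub_preimage_image_hull W) _.
  exact: preimage_subset hullW.
apply/(sub_arrowP _ _ stX (open_preimage _ arrow_open)).
rewrite pullback_nabla_preimage; last exact: arrow_open.
rewrite -preimage_setI.
apply: preimage_subset; exact: arrow_elim.
Qed.

Lemma eval_preimage nablaY V (F : form) : is_spacetime nablaY -> valuation V ->
  Defs.eval (pullback_nabla nablaY) (fun n => f @^-1` V n) F = f @^-1` Defs.eval nablaY V F.
Proof.
move=> stY oV; elim: F => //= [F -> G ->|F -> G ->|F -> G ->|F -> G ->|F ->] //.
- by rewrite arrow_preimage.
- by rewrite pullback_nabla_preimage //; apply: eval_open.
Qed.

Lemma sat_preimage nablaY V (s : sequent) : is_spacetime nablaY -> valuation V ->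
  sat (pullback_nabla nablaY) (fun n => f @^-1` V n) s <-> sat nablaY V s.
Proof.
move=> stY oV; case: s => Gamma A; rewrite /sat /= eval_preimage //.
suff -> : foldr (fun g acc => Defs.eval (pullback_nabla nablaY) (fun n => f @^-1` V n) g `&` acc)
    setT Gamma = f @^-1` foldr (fun g acc => Defs.eval nablaY V g `&` acc) setT Gamma.
  exact: preimage_subsetP.
by elim: Gamma => //= g Gamma ->; rewrite eval_preimage.
Qed.

Lemma pullback_in_class (C : stclass) nablaY :
  in_class C nablaY -> in_class C (pullback_nabla nablaY).
Proof.
case: C => -[stY frameY]; split; try exact: pullback_spacetime.
  move=> W _; apply: subset_trans (sub_preimage_image_hull W) _.
  by apply: preimage_subset; apply: frameY; apply: image_hull_open.
move=> W _ nW0; rewrite -subset0; apply: subset_trans (sub_preimage_image_hull W) _.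
suff -> : image_hull W = set0 by rewrite preimage_set0.
apply: frameY; first exact: image_hull_open.
by rewrite -subset0 -(preimage_subsetP _ set0) preimage_set0 -nW0.
Qed.

End Pullback.

Theorem theorem8p10 (X Y : topologicalType) (f : X -> Y) :
  alexandroff Y -> continuous f -> (forall y : Y, exists x : X, f x = y) ->
  (forall (nablaY : set Y -> set Y) (V : nat -> set Y),
     is_spacetime nablaY -> valuation V ->
     exists (nablaX : set X -> set X) (U : nat -> set X),
       is_spacetime nablaX /\ valuation U /\
       (forall s : sequent, sat nablaX U s <-> sat nablaY V s) /\
       (forall C : stclass, in_class C nablaY -> in_class C nablaX))
  /\
  (forall (C : stclass) (s : sequent), valid X C s -> valid Y C s).
Proof.
move=> Y_alex f_cont f_surj; split.
  move=> nablaY V stY oV.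
  exists (pullback_nabla f nablaY), (fun n => f @^-1` V n).
  split; first exact: pullback_spacetime.
  split; first by move=> n; apply: open_preimage.
  by split=> [s|C]; [apply: sat_preimage | apply: pullback_in_class].
move=> C s validX nablaY CY V oV.
apply/(sat_preimage f Y_alex f_cont f_surj _ _ _ (proj1 CY) oV).
apply: validX; first exact: pullback_in_class.
by move=> n; apply: open_preimage.
Qed.
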